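(* A formula $\varphi\in\mathcal{L}$ is derivable in $\mathsf{ConstCKID}$ (resp. $\mathsf{ConstCKMP}$, resp. $\mathsf{ConstCKMPID}$) if and only if it is valid in all constructive Chellas models satisfying property (id) (resp. property (mp), resp. both (id) and (mp)), where (id): for all $X\subseteq W$ and $w,v\in W$, if $wR_Xv$ then $v\in X$; (mp): for all $X\subseteq W$ and $w\in W$, if $w\in X$ then $wR_Xw$.
   Context: Language $\mathcal{L}$: formulas $\varphi ::= p \mid \bot \mid \varphi\wedge\varphi \mid \varphi\vee\varphi \mid \varphi\to\varphi \mid \varphi \mathrel{\Box\!\!\to} \varphi \mid \varphi \mathrel{\Diamond\!\!\to}\varphi$; $\neg\varphi:=\varphi\to\bot$, $\top:=\neg\bot$, $\varphi\leftrightarrow\psi:=(\varphi\to\psi)\wedge(\psi\to\varphi)$. $\mathsf{ConstCK}$: any axiomatisation of intuitionistic propositional logic in $\mathcal{L}$ with modus ponens, plus CM$_\Box$: $(\varphi\mathrel{\Box\!\!\to}\psi\wedge\chi)\to(\varphi\mathrel{\Box\!\!\to}\psi)\wedge(\varphi\mathrel{\Box\!\!\to}\chi)$; CC$_\Box$: $(\varphi\mathrel{\Box\!\!\to}\psi)\wedge(\varphi\mathrel{\Box\!\!\to}\chi)\to(\varphi\mathrel{\Box\!\!\to}\psi\wedge\chi)$; CN$_\Box$: $\varphi\mathrel{\Box\!\!\to}\top$; CN$_\Diamond$: $\neg(\varphi\mathrel{\Diamond\!\!\to}\bot)$; CK$_\Diamond$: $(\varphi\mathrel{\Box\!\!\to}(\psi\to\chi))\to((\varphi\mathrel{\Diamond\!\!\to}\psi)\to(\varphi\mathrel{\Diamond\!\!\to}\chi))$;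 rules RA$_\Box$: from $\varphi\leftrightarrow\rho$ infer $(\varphi\mathrel{\Box\!\!\to}\psi)\leftrightarrow(\rho\mathrel{\Box\!\!\to}\psi)$; RC$_\Box$: from $\psi\leftrightarrow\chi$ infer $(\varphi\mathrel{\Box\!\!\to}\psi)\leftrightarrow(\varphi\mathrel{\Box\!\!\to}\chi)$; RA$_\Diamond$, RC$_\Diamond$: the same with $\mathrel{\Diamond\!\!\to}$. $\mathsf{ConstCKID}$ = $\mathsf{ConstCK}$ + ID$_\Box$: $\varphi\mathrel{\Box\!\!\to}\varphi$. $\mathsf{ConstCKMP}$ = $\mathsf{ConstCK}$ + MP$_\Box$: $(\varphi\mathrel{\Box\!\!\to}\psi)\to(\varphi\to\psi)$ + MP$_\Diamond$: $\varphi\wedge\psi\to(\varphi\mathrel{\Diamond\!\!\to}\psi)$. $\mathsf{ConstCKMPID}$ = $\mathsf{ConstCK}$ + MP$_\Box$, MP$_\Diamond$, ID$_\Box$. A constructive Chellas model is $M=\langle W,\le,R,V\rangle$ with $W$ nonempty, $\le$ reflexive and transitive on $W$, $V:W\to2^{Atm}$ monotone ($w\le w'$ implies $V(w)\subseteq V(w')$), and $R$ associating to each $X\subseteq W$ a binary relation $R_X$ on $W$. Satisfaction: $w\Vdash p$ iff $p\in V(w)$; $w\not\Vdash\bot$; $\wedge,\vee$ pointwise; $w\Vdash\varphi\to\psi$ iff for all $w'\ge w$, $w'\Vdash\varphi$ implies $w'\Vdash\psi$; with $[\varphi]=\{w\mid w\Vdash\varphi\}$: $w\Vdash\varphi\mathrel{\Box\!\!\to}\psi$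 iff for all $w',v$ with $w\le w'$ and $w'R_{[\varphi]}v$, $v\Vdash\psi$; $w\Vdash\varphi\mathrel{\Diamond\!\!\to}\psi$ iff for all $w'\ge w$ there is $v$ with $w'R_{[\varphi]}v$ and $v\Vdash\psi$. A formula is valid in $M$ if satisfied at every world. *)

From Stdlib Require Import Relations.

Inductive form : Type :=
| Var : nat -> form
| Bot : form
| And : form -> form -> form
| Or  : form -> form -> form
| Imp : form -> form -> form
| CBox : form -> form -> form
| CDia : form -> form -> form.

Definition Neg (a : form) : form := Imp a Bot.
Definition Top : form := Neg Bot.
Definition Iff (a b : form) : form := And (Imp a b) (Imp b a).

Inductive deriv (Ax : form -> Prop) : form -> Prop :=
| A1 a b : deriv Ax (Imp a (Imp b a))
| A2 a b c : deriv Ax (Imp (Imp a (Imp b c)) (Imp (Imp a b) (Imp a c)))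
| A3 a b : deriv Ax (Imp (And a b) a)
| A4 a b : deriv Ax (Imp (And a b) b)
| A5 a b : deriv Ax (Imp a (Imp b (And a b)))
| A6 a b : deriv Ax (Imp a (Or a b))
| A7 a b : deriv Ax (Imp b (Or a b))
| A8 a b c : deriv Ax (Imp (Imp a c) (Imp (Imp b c) (Imp (Or a b) c)))
| A9 a : deriv Ax (Imp Bot a)
| CMbox a b c : deriv Ax (Imp (CBox a (And b c)) (And (CBox a b) (CBox a c)))
| CCbox a b c : deriv Ax (Imp (And (CBox a b) (CBox a c)) (CBox a (And b c)))
| CNbox a : deriv Ax (CBox a Top)
| CNdia a : deriv Ax (Neg (CDia a Bot))
| CKdia a b c : deriv Ax (Imp (CBox a (Imp b c)) (Imp (CDia a b) (CDia a c)))
| Extra a : Ax a -> deriv Ax a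
| MP a b : deriv Ax (Imp a b) -> deriv Ax a -> deriv Ax b
| RAbox a r b : deriv Ax (Iff a r) -> deriv Ax (Iff (CBox a b) (CBox r b))
| RCbox a b c : deriv Ax (Iff b c) -> deriv Ax (Iff (CBox a b) (CBox a c))
| RAdia a r b : deriv Ax (Iff a r) -> deriv Ax (Iff (CDia a b) (CDia r b))
| RCdia a b c : deriv Ax (Iff b c) -> deriv Ax (Iff (CDia a b) (CDia a c)).

Definition ax_ID (f : form) : Prop := exists a, f = CBox a a.
Definition ax_MP (f : form) : Prop :=
  (exists a b, f = Imp (CBox a b) (Imp a b)) \/
  (exists a b, f = Imp (And a b) (CDia a b)).
Definition ax_MPID (f : form) : Prop := ax_MP f \/ ax_ID f.

Definition ConstCKID (f : form) : Prop := deriv ax_ID f.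
Definition ConstCKMP (f : form) : Prop := deriv ax_MP f.
Definition ConstCKMPID (f : form) : Prop := deriv ax_MPID f.

Record model : Type := Model {
  W : Type;
  W_inhabited : W;
  le : W -> W -> Prop;
  le_refl : forall w, le w w;
  le_trans : forall u v w, le u v -> le v w -> le u w;
  R : (W -> Prop) -> W -> W -> Prop;
  V : W -> nat -> Prop;
  V_mono : forall w w' p, le w w' -> V w p -> V w' p
}.

Fixpoint sat (M : model) (w : W M) (f : form) {struct f} : Prop :=
  match f with
  | Var p => V M w p
  | Bot => False
  | And a b => sat M w a /\ sat M w b
  | Or a b => sat M w a \/ sat M w b
  | Imp a b => forall w', le M w w' -> sat M w' a -> sat M w' b
  | CBox a b => forall w' v, le M w w' -> R M (fun u => sat M u a) w' v -> sat M v b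
  | CDia a b => forall w', le M w w' ->
                  exists v, R M (fun u => sat M u a) w' v /\ sat M v b
  end.

Definition valid_in (M : model) (f : form) : Prop := forall w : W M, sat M w f.

Definition prop_id (M : model) : Prop :=
  forall (X : W M -> Prop) (w v : W M), R M X w v -> X v.
Definition prop_mp (M : model) : Prop :=
  forall (X : W M -> Prop) (w : W M), X w -> R M X w w.

From Stdlib Require Import Lia Classical ClassicalEpsilon FunctionalExtensionality PropExtensionality.
From Stdlib Require Cantor.

(* Soundness is an induction on derivations: (id) validates ID[] and (mp) validates MP[] and MP<>.
   Completeness goes through a canonical model. A world is a prime theory u together with a
   choice function nu_u such that p <>-> nu_u(p) is not in u for every p. When X is the truth
   set of a formula p, u R_X v holds if v contains every q with p []-> q in u and v avoids
   nu_u(p); RA[] and RA<> make this independent of the choice of p. When MP[] and MP<> are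
   derivable, the loops u R_X u for u in X are added as well.
   If p <>-> q is in u, then by CK<> the []-consequents of p in u together with q do not prove
   nu_u(p), and Lindenbaum's lemma yields the required successor. If p <>-> q is not in u, the
   copy of u with nu(p) = q has no [p]-successor containing q. Finally ID[] forces every
   [p]-successor into [p], which gives (id), and the loops give (mp). *)

Lemma sat_mono (M : model) f (w w' : W M) : le M w w' -> sat M w f -> sat M w' f.
Proof.
  revert w w'; induction f; intros w w' Hle H; simpl in *.
  - eapply V_mono; eauto.
  - exact H.
  - destruct H; split; eauto.
  - destruct H; [left | right]; eauto.
  - intros w2 H2. apply H. eapply le_trans; eauto.
  - intros w2 v H2. apply H. eapply le_trans; eauto.
  - intros w2 H2. apply H. eapply le_trans; eauto.
Qed.

Lemma valid_Iff_sat (M : model) a b :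
  valid_in M (Iff a b) -> forall u, sat M u a <-> sat M u b.
Proof.
  intros H u. destruct (H u) as [Hab Hba].
  split; intro; [apply Hab | apply Hba]; auto using le_refl.
Qed.

Lemma valid_Iff_truth_set (M : model) a b :
  valid_in M (Iff a b) -> (fun u => sat M u a) = (fun u => sat M u b).
Proof.
  intro H. apply functional_extensionality. intro u.
  apply propositional_extensionality, valid_Iff_sat, H.
Qed.

Ltac ipc_valid :=
  simpl; intros;
  repeat match goal with
  | H : _ /\ _ |- _ => destruct H
  | H : _ \/ _ |- _ => destruct H
  | H : False |- _ => destruct H
  | |- _ /\ _ => split
  end;
  eauto 8 using sat_mono, le_trans, le_refl.

Lemma deriv_sound (Ax : form -> Prop) (M : model) :
  (forall a, Ax a -> valid_in M a) -> forall f, deriv Ax f -> valid_in M f.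
Proof.
  intros HAx f D. induction D; intro w.
  all: try solve [ipc_valid].
  - intros w1 _ H1. split; intros w2 v H2 H3; apply (H1 w2 v H2 H3).
  - intros w1 _ H1. destruct (H1 w1 (le_refl _ _)) as (v & _ & []).
  - intros w1 _ H1 w2 H2 H3 w3 H4. destruct (H3 w3 H4) as (v & Hv & Hb).
    exists v. split; [exact Hv | apply (H1 w3 v); eauto using le_trans, le_refl].
  - apply HAx; auto.
  - apply (IHD1 w w (le_refl _ _)), IHD2.
  - simpl. rewrite (valid_Iff_truth_set M a r IHD). ipc_valid.
  - pose proof (valid_Iff_sat M b c IHD) as E.
    split; intros w1 _ H1 w2 v H2 H3; apply E; eapply H1; eauto.
  - simpl. rewrite (valid_Iff_truth_set M a r IHD). ipc_valid.
  - pose proof (valid_Iff_sat M b c IHD) as E.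
    split; intros w1 _ H1 w2 H2; destruct (H1 w2 H2) as (v & Hv & Hb);
      exists v; split; auto; apply E; auto.
Qed.

Lemma ID_valid (M : model) a : prop_id M -> valid_in M (CBox a a).
Proof. intros Hid w w' v _ HR. exact (Hid _ _ _ HR). Qed.

Lemma MPbox_valid (M : model) a b : prop_mp M -> valid_in M (Imp (CBox a b) (Imp a b)).
Proof. intros Hmp w w1 _ H1 w2 H2 H3. apply (H1 w2 w2 H2), Hmp, H3. Qed.

Lemma MPdia_valid (M : model) a b : prop_mp M -> valid_in M (Imp (And a b) (CDia a b)).
Proof.
  intros Hmp w w1 _ [H1 H2] w2 H3. exists w2.
  split; [apply Hmp |]; eapply sat_mono; eauto.
Qed.

Lemma to_nat_inj x y x' y' :
  Cantor.to_nat (x, y) = Cantor.to_nat (x', y') -> x = x' /\ y = y'.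
Proof.
  intro H. apply (f_equal Cantor.of_nat) in H.
  rewrite !Cantor.cancel_of_to in H. now injection H.
Qed.

Fixpoint form_code (f : form) : nat :=
  let node k a b := Cantor.to_nat (k, Cantor.to_nat (form_code a, form_code b)) in
  match f with
  | Var p => Cantor.to_nat (0, p)
  | Bot => Cantor.to_nat (1, 0)
  | And a b => node 2 a b
  | Or a b => node 3 a b
  | Imp a b => node 4 a b
  | CBox a b => node 5 a b
  | CDia a b => node 6 a b
  end.

Lemma form_code_inj f g : form_code f = form_code g -> f = g.
Proof.
  revert g; induction f; intros [] H; cbn [form_code] in H;
    apply to_nat_inj in H as [Hk H]; try discriminate; subst; try reflexivity;
    apply to_nat_inj in H as [H1 H2]; f_equal; auto.
Qed.

Definition form_of_code (n : nat) : form :=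
  epsilon (inhabits Bot) (fun f => form_code f = n).

Lemma form_of_codeK f : form_of_code (form_code f) = f.
Proof.
  apply form_code_inj. unfold form_of_code.
  apply (epsilon_spec (inhabits Bot) (fun g => form_code g = form_code f)).
  now exists f.
Qed.

Section Completeness.
Variable Ax : form -> Prop.

Inductive prv (G : form -> Prop) : form -> Prop :=
| prv_hyp a : G a -> prv G a
| prv_thm a : deriv Ax a -> prv G a
| prv_mp a b : prv G (Imp a b) -> prv G a -> prv G b.

Definition add_hyp (G : form -> Prop) (a : form) : form -> Prop := fun x => G x \/ x = a.

Lemma deriv_Imp_refl a : deriv Ax (Imp a a).
Proof. apply (MP _ _ _ (MP _ _ _ (A2 Ax a (Imp a a) a) (A1 _ _ _)) (A1 _ _ _)). Qed.

Lemma prv_weaken (G H : form -> Prop) a : (forall x, G x -> H x) -> prv G a -> prv H a.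
Proof. intros HGH P. induction P; eauto using prv. Qed.

Lemma prv_add_hyp G a : prv (add_hyp G a) a.
Proof. apply prv_hyp. now right. Qed.

Lemma prv_deduction G a b : prv (add_hyp G a) b -> prv G (Imp a b).
Proof.
  intro P. induction P as [b [Hb | ->] | b Hb | b c _ IH1 _ IH2].
  - apply (prv_mp _ b); [apply prv_thm, A1 | now apply prv_hyp].
  - apply prv_thm, deriv_Imp_refl.
  - apply (prv_mp _ b); [apply prv_thm, A1 | now apply prv_thm].
  - exact (prv_mp _ _ _ (prv_mp _ _ _ (prv_thm _ _ (A2 _ _ _ _)) IH1) IH2).
Qed.

Lemma deriv_of_prv a : prv (fun _ => False) a -> deriv Ax a.
Proof. induction 1; [contradiction | assumption | eapply MP; eauto]. Qed.

Lemma deriv_Imp_of_prv a b : prv (add_hyp (fun _ => False) a) b -> deriv Ax (Imp a b).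
Proof. intro P. now apply deriv_of_prv, prv_deduction. Qed.

Lemma deriv_Iff_intro a b : deriv Ax (Imp a b) -> deriv Ax (Imp b a) -> deriv Ax (Iff a b).
Proof. intros Hab Hba. exact (MP _ _ _ (MP _ _ _ (A5 _ _ _) Hab) Hba). Qed.

Lemma deriv_Iff_l a b : deriv Ax (Iff a b) -> deriv Ax (Imp a b).
Proof. apply MP, A3. Qed.

Lemma deriv_Iff_r a b : deriv Ax (Iff a b) -> deriv Ax (Imp b a).
Proof. apply MP, A4. Qed.

Lemma deriv_CBox_nec p a : deriv Ax a -> deriv Ax (CBox p a).
Proof.
  intro Ha. apply (MP _ (CBox p Top)); [| apply CNbox].
  apply deriv_Iff_r, RCbox, deriv_Iff_intro.
  - apply (MP _ _ _ (A1 _ _ _)), deriv_Imp_refl.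
  - exact (MP _ _ _ (A1 _ _ _) Ha).
Qed.

Record prime_theory (S : form -> Prop) : Prop := {
  pt_closed : forall a, prv S a -> S a;
  pt_consistent : ~ S Bot;
  pt_prime : forall a b, S (Or a b) -> S a \/ S b
}.

Section Lindenbaum.
Variables (G : form -> Prop) (d : form).
Hypothesis G_not_d : ~ prv G d.

Fixpoint stage (n : nat) : form -> Prop :=
  match n with
  | 0 => G
  | S n => fun x => stage n x \/
      (x = form_of_code n /\ ~ prv (add_hyp (stage n) (form_of_code n)) d)
  end.

Definition limit (x : form) : Prop := exists n, stage n x.

Lemma stage_mono n m x : n <= m -> stage n x -> stage m x.
Proof. induction 1; simpl; auto. Qed.

Lemma stage_not_d n : ~ prv (stage n) d.
Proof.
  induction n as [| n IH]; [exact G_not_d |].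
  intro P. destruct (classic (prv (add_hyp (stage n) (form_of_code n)) d)) as [Hc | Hc].
  - apply IH. revert P. apply prv_weaken. intros x [Hx | [_ Hx]]; tauto.
  - apply Hc. revert P. apply prv_weaken. intros x [Hx | [-> _]]; [left | right]; auto.
Qed.

Lemma limit_compact a : prv limit a -> exists n, prv (stage n) a.
Proof.
  induction 1 as [a [n Hn] | a Ha | a b _ [n1 H1] _ [n2 H2]].
  - exists n. now apply prv_hyp.
  - exists 0. now apply prv_thm.
  - exists (max n1 n2).
    apply (prv_mp _ a); [revert H1 | revert H2];
      apply prv_weaken; intro x; apply stage_mono; lia.
Qed.

Lemma limit_not_d : ~ prv limit d.
Proof. intro P. destruct (limit_compact _ P) as [n Hn]. exact (stage_not_d n Hn). Qed.

Lemma limit_maximal a : ~ limit a -> prv (add_hyp limit a) d.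
Proof.
  intro Ha. apply NNPP. intro Hd. apply Ha. exists (S (form_code a)). right.
  rewrite form_of_codeK. split; [reflexivity |]. intro P. apply Hd. revert P.
  apply prv_weaken. intros x [Hx | ->]; [left; now exists (form_code a) | now right].
Qed.

Lemma limit_prime_theory : prime_theory limit.
Proof.
  split.
  - intros a P. apply NNPP. intro Ha. apply limit_not_d.
    apply (prv_mp _ a); [apply prv_deduction, limit_maximal |]; assumption.
  - intro H. apply limit_not_d. apply (prv_mp _ Bot); [apply prv_thm, A9 | now apply prv_hyp].
  - intros a b H. apply NNPP. intro Hab. apply limit_not_d.
    assert (Ha : prv limit (Imp a d)) by (apply prv_deduction, limit_maximal; tauto).
    assert (Hb : prv limit (Imp b d)) by (apply prv_deduction, limit_maximal; tauto).
    apply (prv_mp _ (Or a b)); [| now apply prv_hyp].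
    exact (prv_mp _ _ _ (prv_mp _ _ _ (prv_thm _ _ (A8 _ _ _ _)) Ha) Hb).
Qed.

End Lindenbaum.

Lemma lindenbaum G d :
  ~ prv G d -> exists S, prime_theory S /\ (forall x, G x -> S x) /\ ~ S d.
Proof.
  intro H. exists (limit G d). split; [now apply limit_prime_theory |]. split.
  - intros x Hx. now exists 0.
  - intro Hd. apply (limit_not_d G d H). now apply prv_hyp.
Qed.

Section PrimeTheory.
Context {S : form -> Prop} (HS : prime_theory S).

Lemma pt_deriv {a} : deriv Ax a -> S a.
Proof. intro. now apply (pt_closed _ HS), prv_thm. Qed.

Lemma pt_mp {a b} : S (Imp a b) -> S a -> S b.
Proof. intros Hab Ha. apply (pt_closed _ HS). apply (prv_mp _ a); now apply prv_hyp. Qed.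

Lemma pt_deriv_mp {a b} : deriv Ax (Imp a b) -> S a -> S b.
Proof. intro. apply pt_mp, pt_deriv; assumption. Qed.

Lemma pt_And a b : S (And a b) <-> S a /\ S b.
Proof.
  split.
  - intro H. split; [apply (pt_deriv_mp (A3 _ a b)) | apply (pt_deriv_mp (A4 _ a b))]; auto.
  - intros [Ha Hb]. exact (pt_mp (pt_deriv_mp (A5 _ a b) Ha) Hb).
Qed.

Lemma pt_Or a b : S (Or a b) <-> S a \/ S b.
Proof.
  split; [apply (pt_prime _ HS) |].
  intros [Ha | Hb]; [apply (pt_deriv_mp (A6 _ a b)) | apply (pt_deriv_mp (A7 _ a b))]; auto.
Qed.

Lemma pt_not_CDia_Bot p : ~ S (CDia p Bot).
Proof. intro H. apply (pt_consistent _ HS), (pt_deriv_mp (CNdia _ p)), H. Qed.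

Lemma pt_CBox_mono p a b : deriv Ax (Imp a b) -> S (CBox p a) -> S (CBox p b).
Proof.
  intros Hab Ha.
  assert (Haab : deriv Ax (Iff a (And a b))).
  { apply deriv_Iff_intro; [| apply A3].
    apply deriv_Imp_of_prv.
    exact (prv_mp _ _ _ (prv_mp _ _ _ (prv_thm _ _ (A5 _ _ _)) (prv_add_hyp _ _))
             (prv_mp _ _ _ (prv_thm _ _ Hab) (prv_add_hyp _ _))). }
  apply (pt_deriv_mp (deriv_Iff_l _ _ (RCbox _ p _ _ Haab))) in Ha.
  now apply (pt_deriv_mp (CMbox _ _ _ _)), pt_And in Ha.
Qed.

Lemma pt_CBox_K p a b : S (CBox p (Imp a b)) -> S (CBox p a) -> S (CBox p b).
Proof.
  intros Hab Ha.
  assert (Hand : S (CBox p (And (Imp a b) a))).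
  { apply (pt_deriv_mp (CCbox _ _ _ _)), pt_And. auto. }
  apply (pt_CBox_mono p (And (Imp a b) a)); [apply deriv_Imp_of_prv | exact Hand].
  exact (prv_mp _ _ _ (prv_mp _ _ _ (prv_thm _ _ (A3 _ _ _)) (prv_add_hyp _ _))
           (prv_mp _ _ _ (prv_thm _ _ (A4 _ _ _)) (prv_add_hyp _ _))).
Qed.

Lemma pt_CBox_of_prv p c : prv (fun x => S (CBox p x)) c -> S (CBox p c).
Proof.
  induction 1; auto.
  - now apply pt_deriv, deriv_CBox_nec.
  - eapply pt_CBox_K; eauto.
Qed.

End PrimeTheory.

Record cworld : Type := CWorld {
  cth : form -> Prop;
  cnu : form -> form;
  cth_prime : prime_theory cth;
  cnu_avoid : forall p, ~ cth (CDia p (cnu p))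
}.

Definition cworld_of_theory S (HS : prime_theory S) : cworld :=
  CWorld S (fun _ => Bot) HS (pt_not_CDia_Bot HS).

Lemma lindenbaum_cworld G d :
  ~ prv G d -> exists w : cworld, (forall x, G x -> cth w x) /\ ~ cth w d.
Proof.
  intro H. destruct (lindenbaum G d H) as (S & HS & HGS & Hd).
  now exists (cworld_of_theory S HS).
Qed.

Lemma deriv_Imp_of_cworlds a b : (forall w : cworld, cth w a -> cth w b) -> deriv Ax (Imp a b).
Proof.
  intro H. apply NNPP. intro Hn.
  destruct (lindenbaum_cworld (add_hyp (fun _ => False) a) b) as (w & Ha & Hb).
  - intro P. now apply Hn, deriv_Imp_of_prv.
  - apply Hb, H, Ha. now right.
Qed.

Lemma deriv_Iff_of_cworlds a b : (forall w : cworld, cth w a <-> cth w b) -> deriv Ax (Iff a b).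
Proof. intro H. apply deriv_Iff_intro; apply deriv_Imp_of_cworlds; apply H. Qed.

Definition mp_derivable : Prop :=
  forall a b, deriv Ax (Imp (CBox a b) (Imp a b)) /\ deriv Ax (Imp (And a b) (CDia a b)).

Definition cle (u v : cworld) : Prop := forall f, cth u f -> cth v f.

Definition cR (X : cworld -> Prop) (u v : cworld) : Prop :=
  (exists p, (forall z, X z <-> cth z p) /\
     (forall q, cth u (CBox p q) -> cth v q) /\ ~ cth v (cnu u p))
  \/ (mp_derivable /\ X u /\ v = u).

Definition canon (w0 : cworld) : model :=
  {| W := cworld; W_inhabited := w0; le := cle;
     le_refl := fun u f Hf => Hf;
     le_trans := fun u v w Huv Hvw f Hf => Hvw f (Huv f Hf);
     R := cR; V := fun u p => cth u (Var p);
     V_mono := fun u v p Huv => Huv (Var p) |}.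

Section Successors.
Variables (w : cworld) (a b : form).

Lemma CBox_refuting_successor :
  ~ cth w (CBox a b) -> exists v : cworld, (forall q, cth w (CBox a q) -> cth v q) /\ ~ cth v b.
Proof.
  intro Hn. apply lindenbaum_cworld. intro P.
  exact (Hn (pt_CBox_of_prv (cth_prime w) _ _ P)).
Qed.

Lemma CDia_successor :
  cth w (CDia a b) -> exists v : cworld,
    (forall q, cth w (CBox a q) -> cth v q) /\ cth v b /\ ~ cth v (cnu w a).
Proof.
  intro H.
  destruct (lindenbaum_cworld (add_hyp (fun x => cth w (CBox a x)) b) (cnu w a))
    as (v & Hv & Hnu).
  - intro P. apply prv_deduction, (pt_CBox_of_prv (cth_prime w)) in P.
    apply (cnu_avoid w a).
    exact (pt_mp (cth_prime w) (pt_deriv_mp (cth_prime w) (CKdia _ _ _ _) P) H).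
  - exists v. split; [intros q Hq; apply Hv; now left |].
    split; [apply Hv; now right | exact Hnu].
Qed.

Lemma CDia_refuting_cworld :
  ~ cth w (CDia a b) -> exists w' : cworld,
    cth w' = cth w /\ forall q, deriv Ax (Iff a q) -> cnu w' q = b.
Proof.
  intro Hn.
  set (nu := fun q => if excluded_middle_informative (deriv Ax (Iff a q)) then b else Bot).
  assert (Havoid : forall q, ~ cth w (CDia q (nu q))).
  { intros q Hq. unfold nu in Hq.
    destruct (excluded_middle_informative (deriv Ax (Iff a q))) as [Hqa | _].
    - exact (Hn (pt_deriv_mp (cth_prime w) (deriv_Iff_r _ _ (RAdia _ _ _ b Hqa)) Hq)).
    - exact (pt_not_CDia_Bot (cth_prime w) q Hq). }
  exists (CWorld (cth w) nu (cth_prime w) Havoid). split; [reflexivity |].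
  intros q Hqa. simpl. unfold nu.
  destruct (excluded_middle_informative (deriv Ax (Iff a q))); [reflexivity | contradiction].
Qed.

End Successors.

Section Truth.
Variables (w0 : cworld) (a b : form).
Hypothesis IHa : forall w, sat (canon w0) w a <-> cth w a.
Hypothesis IHb : forall w, sat (canon w0) w b <-> cth w b.

Lemma deriv_Iff_of_truth_set p :
  (forall z, sat (canon w0) z a <-> cth z p) -> deriv Ax (Iff a p).
Proof. intro Hp. apply deriv_Iff_of_cworlds. intro z. rewrite <- IHa. apply Hp. Qed.

Lemma truth_Imp w : sat (canon w0) w (Imp a b) <-> cth w (Imp a b).
Proof.
  split.
  - intro H. apply NNPP. intro Hn.
    destruct (lindenbaum_cworld (add_hyp (cth w) a) b) as (w' & Hw' & Hb).
    + intro P. apply Hn, (pt_closed _ (cth_prime w)), prv_deduction, P.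
    + apply Hb, IHb, H; [intros f Hf; apply Hw'; now left | apply IHa, Hw'; now right].
  - intros H w' Hle Ha. apply IHb.
    apply (pt_mp (cth_prime w') (a := a)); [apply Hle, H | now apply IHa].
Qed.

Lemma truth_CBox w : sat (canon w0) w (CBox a b) <-> cth w (CBox a b).
Proof.
  split.
  - intro H. apply NNPP. intro Hn.
    destruct (CBox_refuting_successor w a b Hn) as (v & Hbox & Hb).
    (* The copy of [w] with [cnu = Bot] only asks its successors to be consistent. *)
    apply Hb, IHb, (H (cworld_of_theory (cth w) (cth_prime w)) v); [now intros f Hf |].
    left. exists a. split; [exact IHa |].
    split; [exact Hbox | apply (pt_consistent _ (cth_prime v))].
  - intros H w' v Hle [(p & Hp & Hbox & _) | (Hmp & Ha & ->)]; apply IHb.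
    + apply Hbox, (pt_deriv_mp (cth_prime w') (a := CBox a b)); [| now apply Hle].
      apply deriv_Iff_l, RAbox, deriv_Iff_of_truth_set, Hp.
    + apply (pt_mp (cth_prime w') (a := a)); [| now apply IHa].
      apply (pt_deriv_mp (cth_prime w') (proj1 (Hmp a b))), Hle, H.
Qed.

Lemma truth_CDia w : sat (canon w0) w (CDia a b) <-> cth w (CDia a b).
Proof.
  split.
  - intro H. apply NNPP. intro Hn.
    destruct (CDia_refuting_cworld w a b Hn) as (w' & Hth & Hnu).
    destruct (H w') as (v & HR & Hv); [intros f Hf; simpl; now rewrite Hth |].
    apply IHb in Hv. destruct HR as [(p & Hp & _ & Hnv) | (Hmp & Ha & ->)].
    + apply Hnv. rewrite Hnu; [exact Hv |]. exact (deriv_Iff_of_truth_set p Hp).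
    + apply Hn. rewrite <- Hth.
      apply (pt_deriv_mp (cth_prime w') (proj2 (Hmp a b))), (pt_And (cth_prime w')).
      split; [now apply IHa | exact Hv].
  - intros H w' Hle.
    destruct (CDia_successor w' a b (Hle _ H)) as (v & Hbox & Hb & Hnu).
    exists v. split; [left; exists a; auto | now apply IHb].
Qed.

End Truth.

Lemma truth w0 f w : sat (canon w0) w f <-> cth w f.
Proof.
  revert w; induction f; intro w.
  - reflexivity.
  - split; [contradiction | apply (pt_consistent _ (cth_prime w))].
  - simpl. rewrite IHf1, IHf2. symmetry. apply (pt_And (cth_prime w)).
  - simpl. rewrite IHf1, IHf2. symmetry. apply (pt_Or (cth_prime w)).
  - now apply truth_Imp.
  - now apply truth_CBox.
  - now apply truth_CDia.
Qed.

Lemma canonical_completeness (P : model -> Prop) f :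
  (forall w0, P (canon w0)) -> (forall M, P M -> valid_in M f) -> deriv Ax f.
Proof.
  intros HP H. apply NNPP. intro Hn.
  destruct (lindenbaum_cworld (fun _ => False) f) as (w & _ & Hf).
  - intro P'. apply Hn, deriv_of_prv, P'.
  - apply Hf, (truth w), H, HP.
Qed.

Lemma canon_prop_id w0 : (forall a, deriv Ax (CBox a a)) -> prop_id (canon w0).
Proof.
  intros HID X u v [(p & Hp & Hbox & _) | (_ & Hx & ->)]; [| exact Hx].
  apply Hp, Hbox, (pt_deriv (cth_prime u)), HID.
Qed.

Lemma canon_prop_mp w0 : mp_derivable -> prop_mp (canon w0).
Proof. intros Hmp X u Hx. now right. Qed.

End Completeness.

Lemma deriv_characterization (Ax : form -> Prop) (P : model -> Prop) :
  (forall M, P M -> forall a, Ax a -> valid_in M a) ->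
  (forall w0 : cworld Ax, P (canon Ax w0)) ->
  forall f, deriv Ax f <-> (forall M, P M -> valid_in M f).
Proof.
  intros Hsound Hcanon f. split.
  - intros D M HM. exact (deriv_sound Ax M (Hsound M HM) f D).
  - now apply canonical_completeness.
Qed.

Lemma ax_ID_valid (M : model) : prop_id M -> forall a, ax_ID a -> valid_in M a.
Proof. intros Hid a [b ->]. now apply ID_valid. Qed.

Lemma ax_MP_valid (M : model) : prop_mp M -> forall a, ax_MP a -> valid_in M a.
Proof.
  intros Hmp a [(b & c & ->) | (b & c & ->)]; [apply MPbox_valid | apply MPdia_valid]; auto.
Qed.

Lemma ID_deriv_of_ax (Ax : form -> Prop) :
  (forall a, ax_ID a -> Ax a) -> forall a, deriv Ax (CBox a a).
Proof. intros H a. apply Extra, H. now exists a. Qed.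

Lemma mp_derivable_of_ax (Ax : form -> Prop) :
  (forall a, ax_MP a -> Ax a) -> mp_derivable Ax.
Proof. intros H a b. split; apply Extra, H; [left | right]; eauto. Qed.

Theorem theorem12 :
  (forall f : form,
     ConstCKID f <-> (forall M : model, prop_id M -> valid_in M f)) /\
  (forall f : form,
     ConstCKMP f <-> (forall M : model, prop_mp M -> valid_in M f)) /\
  (forall f : form,
     ConstCKMPID f <-> (forall M : model, prop_id M -> prop_mp M -> valid_in M f)).
Proof.
  split; [| split].
  - apply deriv_characterization; [exact ax_ID_valid |].
    intro w0. now apply canon_prop_id, ID_deriv_of_ax.
  - apply deriv_characterization; [exact ax_MP_valid |].
    intro w0. now apply canon_prop_mp, mp_derivable_of_ax.
  - intro f. unfold ConstCKMPID.
    rewrite (deriv_characterization ax_MPID (fun M => prop_id M /\ prop_mp M)).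
    + split; intros H M; [intros Hid Hmp | intros [Hid Hmp]]; auto.
    + intros M [Hid Hmp] a [Ha | Ha]; [now apply ax_MP_valid | now apply ax_ID_valid].
    + intro w0. split.
      * apply canon_prop_id, ID_deriv_of_ax. intros a Ha. now right.
      * apply canon_prop_mp, mp_derivable_of_ax. intros a Ha. now left.
Qed.
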